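(* Let $d\ge2$ and $i\in\{0,\dots,d-1\}$. Let $(X,\omega)=\#^d_{t_h+it_v}\mathbb{T}^2$ be a $d$-symmetric differential with twist coordinate $[t_h+it_v]\in\mathbb{T}^2_d$. If $(X,\omega)\in\mathscr{C}_i$, then the horizontal foliation of $(X,\omega)$ contains $(i,d)$ maximal cylinders of width $\frac{d}{(i,d)}$ and $(i+1,d)$ maximal cylinders of width $\frac{d}{(i+1,d)}$. If $(X,\omega)\in\partial^{btm}\mathscr{C}_i$, then its horizontal foliation contains $(i,d)$ cylinders of width $\frac{d}{(i,d)}$.
   Context: $(a,d)=\gcd(a,d)$ with $(0,d)=d$. $\mathbb{T}^2=\mathbb{C}/(\mathbb{Z}\oplus\mathbb{Z}i)$, $\mathbb{T}^2_d=\mathbb{C}/d(\mathbb{Z}\oplus\mathbb{Z}i)$. $\#^d_v\mathbb{T}^2$ is obtained by taking $d$ copies of $\mathbb{T}^2$, slitting each along the image of $[0,v]$ and gluing one side of the slit on copy $j$ to the opposite side on copy $j+1\bmod d$ (by limits for non-injective segments); the map $t_h+it_v\mapsto\#^d_{t_h+it_v}\mathbb{T}^2$ descends to twist coordinates on $\mathbb{T}^2_d$, which (minus the integer lattice points) parametrizes the modular fiber $\mathscr{F}^{sym}_d$ of $d$-symmetric differentials over $\mathbb{T}^2$. The horizontal foliation of $\mathscr{F}^{sym}_d\cong\mathbb{T}^2_d$ consists of the $d$ open cylinders $\mathscr{C}_i=\{[t_h+it_v]:\lfloor t_v\rfloor\equiv i \bmod d,\ t_v\notin\mathbb{Z}\}$,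 $i=0,\dots,d-1$, each of width $d$ and height $1$, with bottom boundaries $\partial^{btm}\mathscr{C}_i=\{[t_h+it_v]:t_v\equiv i\bmod d\}$ (minus lattice points). *)

From Stdlib Require Import Reals ZArith Arith List Relations.
Open Scope R_scope.

(* A point of #^d_v T^2 is represented by a sheet index (an integer, read
   modulo d) together with a representative (x,y) in R^2 of a point of
   T^2 = C/(Z + Zi). *)
Record pt := Pt { sheet : Z; px : R; py : R }.

Definition isZ (r : R) : Prop := exists n : Z, r = IZR n.

Definition same_pt (d : nat) (P Q : pt) : Prop :=
  Z.modulo (sheet P - sheet Q) (Z.of_nat d) = 0%Z /\
  isZ (px P - px Q) /\ isZ (py P - py Q).

Definition on_slit (th tv x y : R) : Prop :=
  exists (s : R) (m1 m2 : Z),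
    0 <= s <= 1 /\ x = s * th + IZR m1 /\ y = s * tv + IZR m2.

(* (x,y) is (the image of) an endpoint of the slit (the cone points). *)
Definition is_sing (th tv x y : R) : Prop :=
  (isZ x /\ isZ y) \/ (isZ (x - th) /\ isZ (y - tv)).

Definition hcross (th tv x y t : R) (c : Z * Z * R) : Prop :=
  let '(m1, m2, tau) := c in
  0 < tau < t /\
  exists s, 0 < s < 1 /\ x + tau = s * th + IZR m1 /\ y = s * tv + IZR m2.

(* The horizontal segment avoids the cone points and does not run along the
   slit (the latter can only happen when the slit is horizontal). *)
Definition hpath_ok (th tv x y t : R) : Prop :=
  (forall tau, 0 <= tau <= t -> ~ is_sing th tv (x + tau) y) /\
  (tv = 0 -> forall tau, 0 <= tau <= t -> ~ on_slit th tv (x + tau) y).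

(* Crossing the slit from its left side to its right side moves from copy j
   to copy j+1; a rightward horizontal crossing does so iff tv > 0. *)
Definition sgnZ (r : R) : Z :=
  match Rlt_dec 0 r with left _ => 1%Z | right _ => (-1)%Z end.

Definition hmove (th tv : R) (P : pt) (t : R) (Q : pt) : Prop :=
  0 <= t /\
  ~ on_slit th tv (px P) (py P) /\ ~ on_slit th tv (px P + t) (py P) /\
  hpath_ok th tv (px P) (py P) t /\
  exists l : list (Z * Z * R),
    NoDup l /\ (forall c, In c l <-> hcross th tv (px P) (py P) t c) /\
    Q = Pt (sheet P + sgnZ tv * Z.of_nat (length l))%Z (px P + t) (py P).

Definition reg_closed (d : nat) (th tv : R) (P : pt) : Prop :=
  ~ on_slit th tv (px P) (py P) /\
  exists T Q, 0 < T /\ hmove th tv P T Q /\ same_pt d Q P.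

Definition leaf_width (d : nat) (th tv : R) (P : pt) (w : R) : Prop :=
  0 < w /\ (exists Q, hmove th tv P w Q /\ same_pt d Q P) /\
  forall t Q, 0 < t < w -> hmove th tv P t Q -> ~ same_pt d Q P.

Definition vmove (d : nat) (th tv : R) (P Q : pt) : Prop :=
  sheet Q = sheet P /\ px Q = px P /\
  forall y, Rmin (py P) (py Q) <= y <= Rmax (py P) (py Q) ->
    reg_closed d th tv (Pt (sheet P) (px P) y).

Definition cyl_step (d : nat) (th tv : R) (P Q : pt) : Prop :=
  reg_closed d th tv P /\ reg_closed d th tv Q /\
  (same_pt d P Q \/ (exists t, hmove th tv P t Q) \/ vmove d th tv P Q).

Definition same_cyl (d : nat) (th tv : R) : relation pt :=
  clos_refl_sym_trans pt (cyl_step d th tv).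

(* cs lists the maximal horizontal cylinders of #^d_v T^2, each given by a
   representative point and its width (circumference): every regular point is
   in the cylinder of exactly one listed representative. *)
Definition horizontal_cylinders (d : nat) (th tv : R) (cs : list (pt * R)) : Prop :=
  (forall c, In c cs -> reg_closed d th tv (fst c) /\ leaf_width d th tv (fst c) (snd c)) /\
  ForallOrdPairs (fun c c' => ~ same_cyl d th tv (fst c) (fst c')) cs /\
  (forall P, reg_closed d th tv P -> exists c, In c cs /\ same_cyl d th tv P (fst c)).

(* [th + i tv] lies in the open cylinder C_i of F^sym_d = T^2_d. *)
Definition in_Ci (d i : nat) (th tv : R) : Prop :=
  exists n : Z, IZR n < tv < IZR n + 1 /\ Z.modulo n (Z.of_nat d) = Z.of_nat i.

(* [th + i tv] lies in the bottom boundary of C_i (minus lattice points). *)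
Definition in_btm_Ci (d i : nat) (th tv : R) : Prop :=
  (exists n : Z, tv = IZR n /\ Z.modulo n (Z.of_nat d) = Z.of_nat i) /\ ~ isZ th.

(** Represent a point of [#^d_v T^2] by a sheet [j] and a point [(x, y)] of the plane,
    and call a height [y] generic when neither [y] nor [y - tv] is an integer. At such a
    height the lifts of the slit cross the horizontal line at the abscissas
    [slit_abscissa y m], so the number of slit crossings of the segment from [x] to
    [x + t] is the increment of the integer-valued [crossing_potential x y]; every
    crossing moves the sheet by [sgnZ tv]. A unit horizontal translation therefore
    changes the sheet by the crossing number [k = Int_part y - Int_part (y - tv)], and
    [(k, (j - sgnZ tv * crossing_potential x y) mod gcd(k, d))] is invariant along
    leaves, along vertical segments of regular points and under the identifications of
    the surface. Conversely two regular points with the same crossing number are joined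
    by horizontal moves and short vertical moves dodging the slit; full turns shift the
    sheet by multiples of [k], hence (Bezout, the sheet being read modulo [d]) by all
    multiples of [gcd(k, d)]. So there are exactly [gcd(k, d)] cylinders of crossing
    number [k], and their closed leaves have length [d / gcd(k, d)]. For
    [n < tv < n + 1] the crossing number takes exactly the values [n] and [n + 1]; for
    [tv = n] it is always [n]. *)

From Stdlib Require Import Reals ZArith List Relations Lia Lra Znumtheory.
From Stdlib Require Import ClassicalEpsilon Classical.
Open Scope R_scope.

Lemma Nat2Z_inj_gcd (a b : nat) :
  Z.of_nat (Nat.gcd a b) = Z.gcd (Z.of_nat a) (Z.of_nat b).
Proof.
  revert b; induction a as [a IH] using (well_founded_induction lt_wf); intros b.
  destruct a as [|a].
  - change (Z.of_nat 0) with 0%Z; rewrite Nat.gcd_0_l, Z.gcd_0_l; lia.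
  - rewrite <- (Nat.Lcm0.gcd_mod b (S a)), IH by (apply Nat.mod_upper_bound; lia).
    rewrite Nat2Z.inj_mod, Z.gcd_mod_l; apply Z.gcd_comm.
Qed.

Lemma Z_gcd_mod_nat (n : Z) (i d : nat) : (n mod Z.of_nat d = Z.of_nat i)%Z ->
  Z.gcd n (Z.of_nat d) = Z.of_nat (Nat.gcd i d).
Proof. intros Hn; rewrite <- Z.gcd_mod_l, Hn; symmetry; apply Nat2Z_inj_gcd. Qed.

Lemma Z_gcd_succ_mod_nat (n : Z) (i d : nat) : (0 < d)%nat ->
  (n mod Z.of_nat d = Z.of_nat i)%Z ->
  Z.gcd (n + 1) (Z.of_nat d) = Z.of_nat (Nat.gcd (i + 1) d).
Proof.
  intros Hd Hn.
  rewrite <- Z.gcd_mod_l, <- Z.add_mod_idemp_l, Hn, Z.gcd_mod_l by lia.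
  now rewrite Nat2Z_inj_gcd, Nat2Z.inj_add.
Qed.

Lemma Z_gcd_nat_pos (k : Z) (d : nat) : (0 < d)%nat -> (0 < Z.gcd k (Z.of_nat d))%Z.
Proof.
  intros Hd. pose proof (Z.gcd_nonneg k (Z.of_nat d)).
  enough (Z.gcd k (Z.of_nat d) <> 0%Z) by lia.
  intros E; apply Z.gcd_eq_0 in E; lia.
Qed.

Lemma Z_divide_mul_div_gcd (n k z : Z) : (0 < n)%Z ->
  (n | z * k)%Z -> (n / Z.gcd k n | z)%Z.
Proof.
  intros Hn Hdiv.
  set (g := Z.gcd k n).
  assert (Hg : g <> 0%Z) by (intros E; apply Z.gcd_eq_0 in E; lia).
  destruct (Z.gcd_divide_l k n) as [k' Hk], (Z.gcd_divide_r k n) as [n' Hn'].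
  fold g in Hk, Hn'.
  assert (Hcop : Z.gcd n' k' = 1%Z).
  { rewrite Z.gcd_comm.
    rewrite <- (Z.div_mul k' g), <- (Z.div_mul n' g), <- Hk, <- Hn' by exact Hg.
    now apply Z.gcd_div_gcd. }
  rewrite Hn', Z.div_mul by exact Hg.
  apply Z.gauss with k'; [|exact Hcop].
  rewrite Hn', Hk, Z.mul_assoc in Hdiv.
  rewrite Z.mul_comm; now apply Z.mul_divide_cancel_r in Hdiv.
Qed.

Lemma Int_part_bounds (x : R) : IZR (Int_part x) <= x < IZR (Int_part x) + 1.
Proof. destruct (base_Int_part x); lra. Qed.

Lemma Int_part_eq (x : R) (z : Z) : IZR z <= x < IZR z + 1 -> Int_part x = z.
Proof. intros H; symmetry; apply Int_part_spec; lra. Qed.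

Lemma Int_part_plus_IZR (x : R) (m : Z) : Int_part (x + IZR m) = (Int_part x + m)%Z.
Proof.
  apply Int_part_eq; rewrite plus_IZR; destruct (Int_part_bounds x); lra.
Qed.

Lemma Int_part_IZR (z : Z) : Int_part (IZR z) = z.
Proof. apply Int_part_eq; lra. Qed.

Lemma Int_part_le (x y : R) : x <= y -> (Int_part x <= Int_part y)%Z.
Proof.
  intros H; destruct (Int_part_bounds x), (Int_part_bounds y).
  enough (Int_part x < Int_part y + 1)%Z by lia.
  apply lt_IZR; rewrite plus_IZR; lra.
Qed.

Lemma Int_part_lt_iff (x : R) (z : Z) : x < IZR z <-> (Int_part x < z)%Z.
Proof.
  destruct (Int_part_bounds x); split; intros Hz.
  - apply lt_IZR; lra.
  - assert (IZR (Int_part x + 1) <= IZR z) by (apply IZR_le; lia).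
    rewrite plus_IZR in *; lra.
Qed.

Lemma IZR_lt_iff_le_Int_part (x : R) (z : Z) : ~ isZ x ->
  IZR z < x <-> (z <= Int_part x)%Z.
Proof.
  intros Hx; destruct (Int_part_bounds x); split; intros Hz.
  - enough (z < Int_part x + 1)%Z by lia.
    apply lt_IZR; rewrite plus_IZR; lra.
  - apply IZR_le in Hz.
    destruct (Req_dec (IZR (Int_part x)) x) as [E|E]; [|lra].
    exfalso; apply Hx; now exists (Int_part x).
Qed.

Lemma isZ_IZR (z : Z) : isZ (IZR z).
Proof. now exists z. Qed.

Lemma isZ_plus_IZR (x : R) (m : Z) : isZ (x + IZR m) <-> isZ x.
Proof.
  split; intros [n Hn].
  - exists (n - m)%Z; rewrite minus_IZR; lra.
  - exists (n + m)%Z; rewrite plus_IZR; lra.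
Qed.

Lemma isZ_Int_part (x : R) : isZ x -> IZR (Int_part x) = x.
Proof. intros [n ->]; now rewrite Int_part_IZR. Qed.

Lemma segment_between (y y' l : R) : 0 <= l <= 1 ->
  Rmin y y' <= y + l * (y' - y) <= Rmax y y'.
Proof. intros Hl; unfold Rmin, Rmax; destruct Rle_dec; split; nra. Qed.

Lemma subsegment_between (y y' u l : R) : Rmin y y' <= u <= Rmax y y' -> 0 <= l <= 1 ->
  Rmin y y' <= y + l * (u - y) <= Rmax y y'.
Proof. intros Hu Hl; unfold Rmin, Rmax in *; destruct Rle_dec; split; nra. Qed.

Lemma Int_part_const_on_segment (a b : R) :
  (forall l, 0 <= l <= 1 -> ~ isZ (a + l * (b - a))) -> Int_part a = Int_part b.
Proof.
  intros Hseg; apply NNPP; intros Hne.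
  destruct (Int_part_bounds a), (Int_part_bounds b).
  assert (Hz : exists z, (a <= IZR z <= b \/ b <= IZR z <= a) /\ a <> b).
  { destruct (Z_lt_le_dec (Int_part a) (Int_part b)) as [L|L].
    - assert (IZR (Int_part a + 1) <= IZR (Int_part b)) by (apply IZR_le; lia).
      rewrite plus_IZR in *; exists (Int_part b); split; lra.
    - assert (IZR (Int_part b + 1) <= IZR (Int_part a)) by (apply IZR_le; lia).
      rewrite plus_IZR in *; exists (Int_part a); split; lra. }
  destruct Hz as [z [Hz Hab]].
  assert (El : (IZR z - a) / (b - a) * (b - a) = IZR z - a)
    by (field; contradict Hab; lra).
  apply (Hseg ((IZR z - a) / (b - a))).
  - split; nra.
  - rewrite El; replace (a + (IZR z - a)) with (IZR z) by ring; apply isZ_IZR.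
Qed.

Lemma Int_part_between (a b u : R) : Int_part a = Int_part b ->
  Rmin a b <= u <= Rmax a b -> Int_part u = Int_part a /\ (isZ u -> u = a \/ u = b).
Proof.
  intros E Hu; destruct (Int_part_bounds a), (Int_part_bounds b).
  unfold Rmin, Rmax in Hu; destruct (Rle_dec a b) as [Hab|Hab].
  - pose proof (Int_part_le a u ltac:(lra)); pose proof (Int_part_le u b ltac:(lra)).
    assert (Eu : Int_part u = Int_part a) by lia.
    split; [exact Eu|]; intros HZ; apply isZ_Int_part in HZ; rewrite Eu in HZ; lra.
  - pose proof (Int_part_le b u ltac:(lra)); pose proof (Int_part_le u a ltac:(lra)).
    assert (Eu : Int_part u = Int_part a) by lia.
    split; [exact Eu|]; intros HZ; apply isZ_Int_part in HZ; rewrite Eu, E in HZ; lra.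
Qed.

Lemma Rabs_mult_between (c y1 y2 u : R) : Rmin y1 y2 <= u <= Rmax y1 y2 ->
  Rabs (c * (u - y1)) <= Rabs (c * (y2 - y1)).
Proof.
  intros Hu; rewrite !Rabs_mult; apply Rmult_le_compat_l; [apply Rabs_pos|].
  unfold Rmin, Rmax in Hu; unfold Rabs; repeat destruct Rcase_abs; destruct Rle_dec; lra.
Qed.

Lemma exists_nat_mult_ge (a rho : R) : 0 < rho -> exists N : nat, a <= INR N * rho.
Proof.
  intros Hrho; destruct (archimed (a / rho)) as [Hup _].
  exists (Z.to_nat (up (a / rho))).
  assert (a / rho <= INR (Z.to_nat (up (a / rho)))).
  { destruct (Z_le_gt_dec 0 (up (a / rho))) as [L|L].
    - rewrite INR_IZR_INZ, Z2Nat.id by exact L; lra.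
    - replace (Z.to_nat _) with 0%nat by lia.
      apply Z.gt_lt, IZR_lt in L; simpl; lra. }
  assert (a = a / rho * rho) by (field; lra); nra.
Qed.

Definition zrange (lo hi : Z) : list Z :=
  map (fun k => (lo + 1 + Z.of_nat k)%Z) (seq 0 (Z.to_nat (hi - lo))).

Lemma In_zrange (lo hi z : Z) : In z (zrange lo hi) <-> (lo < z <= hi)%Z.
Proof.
  unfold zrange; rewrite in_map_iff; split.
  - intros [k [<- Hk]]; apply in_seq in Hk; lia.
  - intros H; exists (Z.to_nat (z - lo - 1)); split; [lia|apply in_seq; lia].
Qed.

Lemma length_zrange (lo hi : Z) : length (zrange lo hi) = Z.to_nat (hi - lo).
Proof. unfold zrange; now rewrite length_map, length_seq. Qed.

Lemma NoDup_map_inj {A B : Type} (f : A -> B) (l : list A) :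
  (forall a b, f a = f b -> a = b) -> NoDup l -> NoDup (map f l).
Proof. intros Hf; apply NoDup_map_NoDup_ForallPairs; intros a b _ _; apply Hf. Qed.

Lemma NoDup_zrange (lo hi : Z) : NoDup (zrange lo hi).
Proof. apply NoDup_map_inj; [intros; lia|apply seq_NoDup]. Qed.

Lemma zrange_shift (lo hi b : Z) :
  zrange (lo + b) (hi + b) = map (fun z => (z + b)%Z) (zrange lo hi).
Proof.
  unfold zrange; rewrite map_map.
  replace (hi + b - (lo + b))%Z with (hi - lo)%Z by lia.
  apply map_ext; intros; lia.
Qed.

Fixpoint sumZ {A : Type} (f : A -> Z) (l : list A) : Z :=
  match l with nil => 0%Z | a :: l => (f a + sumZ f l)%Z end.

Lemma sumZ_ext {A : Type} (f g : A -> Z) (l : list A) :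
  (forall a, In a l -> f a = g a) -> sumZ f l = sumZ g l.
Proof. induction l; simpl; intros H; auto; rewrite H, IHl; auto. Qed.

Lemma sumZ_map {A B : Type} (f : B -> Z) (g : A -> B) (l : list A) :
  sumZ f (map g l) = sumZ (fun a => f (g a)) l.
Proof. induction l; simpl; congruence. Qed.

Lemma sumZ_add_const {A : Type} (f : A -> Z) (c : Z) (l : list A) :
  sumZ (fun a => f a + c)%Z l = (sumZ f l + c * Z.of_nat (length l))%Z.
Proof. induction l; simpl; lia. Qed.

Lemma sumZ_sub {A : Type} (f g : A -> Z) (l : list A) :
  sumZ (fun a => f a - g a)%Z l = (sumZ f l - sumZ g l)%Z.
Proof. induction l; simpl; lia. Qed.

Lemma length_flat_map_sumZ {A B : Type} (f : A -> list B) (l : list A) :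
  Z.of_nat (length (flat_map f l)) = sumZ (fun a => Z.of_nat (length (f a))) l.
Proof. induction l; simpl; auto; rewrite length_app; lia. Qed.

Lemma NoDup_flat_map {A B : Type} (f : A -> list B) (l : list A) :
  NoDup l -> (forall a, In a l -> NoDup (f a)) ->
  (forall a b x, In a l -> In b l -> In x (f a) -> In x (f b) -> a = b) ->
  NoDup (flat_map f l).
Proof.
  induction l as [|a l IH]; intros Hl Hf Hdisj; simpl; [constructor|].
  inversion Hl; subst; apply NoDup_app.
  - apply Hf; simpl; auto.
  - apply IH; auto; [intros; apply Hf|intros; eapply Hdisj]; simpl; eauto.
  - intros x Hx Hx'; apply in_flat_map in Hx' as [b [Hb Hxb]].
    assert (a = b) by (eapply Hdisj; simpl; eauto); subst; contradiction.
Qed.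

Lemma ForallOrdPairs_of_NoDup_map {A B : Type} (R : A -> A -> Prop) (f : A -> B)
  (l : list A) :
  (forall a b, f a <> f b -> R a b) -> NoDup (map f l) -> ForallOrdPairs R l.
Proof.
  intros HR; induction l as [|a l IH]; intros Hl; constructor; inversion Hl; auto.
  apply Forall_forall; intros b Hb; apply HR; intros E.
  rewrite E in *; auto using in_map.
Qed.

Lemma ForallOrdPairs_app {A : Type} (R : A -> A -> Prop) (l l' : list A) :
  ForallOrdPairs R l -> ForallOrdPairs R l' -> (forall a b, In a l -> In b l' -> R a b) ->
  ForallOrdPairs R (l ++ l').
Proof.
  induction 1 as [|a l Ha Hl IH]; intros Hl' Hcross; simpl; auto.
  constructor.
  - apply Forall_app; split; auto.
    apply Forall_forall; intros b Hb; apply Hcross; simpl; auto.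
  - apply IH; auto; intros; apply Hcross; simpl; auto.
Qed.

(** * Slit crossings at a fixed height *)

Definition generic_height (tv y : R) : Prop := ~ isZ y /\ ~ isZ (y - tv).

Definition same_band (tv y y' : R) : Prop :=
  Int_part y = Int_part y' /\ Int_part (y - tv) = Int_part (y' - tv).

Lemma same_band_on_generic_segment (tv y y' : R) :
  (forall u, Rmin y y' <= u <= Rmax y y' -> generic_height tv u) ->
  forall u, Rmin y y' <= u <= Rmax y y' -> same_band tv y u.
Proof.
  intros Hg u Hu; split; apply Int_part_const_on_segment; intros l Hl.
  - apply Hg, subsegment_between; auto.
  - replace (y - tv + l * (u - tv - (y - tv))) with ((y + l * (u - y)) - tv) by ring.
    apply Hg, subsegment_between; auto.
Qed.

Lemma generic_between (tv y1 y2 u : R) :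
  generic_height tv y1 -> generic_height tv y2 -> same_band tv y1 y2 ->
  Rmin y1 y2 <= u <= Rmax y1 y2 -> generic_height tv u /\ same_band tv y1 u.
Proof.
  intros [G1 G1'] [G2 G2'] [B B'] Hu.
  assert (Hu' : Rmin (y1 - tv) (y2 - tv) <= u - tv <= Rmax (y1 - tv) (y2 - tv))
    by (unfold Rmin, Rmax in *; do 2 destruct Rle_dec; lra).
  destruct (Int_part_between y1 y2 u B Hu) as [E Hz].
  destruct (Int_part_between (y1 - tv) (y2 - tv) (u - tv) B' Hu') as [E' Hz'].
  split; [split|split; congruence].
  - intros HZ; destruct (Hz HZ) as [-> | ->]; auto.
  - intros HZ; destruct (Hz' HZ) as [Ev|Ev]; [apply G1'|apply G2']; rewrite <- Ev; auto.
Qed.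

Section SlitCrossings.

Variables th tv : R.

Definition slit_lifts (y : R) : list Z :=
  if Rlt_dec 0 tv then zrange (Int_part (y - tv)) (Int_part y)
  else zrange (Int_part y) (Int_part (y - tv)).

Definition slit_abscissa (y : R) (m : Z) : R := th * ((y - IZR m) / tv).

Definition crossing_number (y : R) : Z := (Int_part y - Int_part (y - tv))%Z.

Definition crossing_potential (x y : R) : Z :=
  sumZ (fun m => Int_part (x - slit_abscissa y m)) (slit_lifts y).

Lemma In_slit_lifts (y : R) (m : Z) : generic_height tv y ->
  In m (slit_lifts y) <-> exists s, 0 < s < 1 /\ y = s * tv + IZR m.
Proof.
  intros [Hy Hyv]; unfold slit_lifts.
  destruct (Rlt_dec 0 tv) as [Hp|Hp]; rewrite In_zrange.
  - rewrite <- Int_part_lt_iff, <- IZR_lt_iff_le_Int_part by exact Hy; split.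
    + intros [H1 H2]; exists ((y - IZR m) / tv).
      assert (E : (y - IZR m) / tv * tv = y - IZR m) by (field; lra).
      split; [split|]; nra.
    + intros [s [Hs E]]; nra.
  - rewrite <- Int_part_lt_iff, <- IZR_lt_iff_le_Int_part by exact Hyv; split.
    + intros [H1 H2]; exists ((y - IZR m) / tv).
      assert (E : (y - IZR m) / tv * tv = y - IZR m) by (field; lra).
      split; [split|]; nra.
    + intros [s [Hs E]]; destruct (Req_dec tv 0) as [Z0|Z0].
      * exfalso; apply Hy; exists m; rewrite E, Z0; ring.
      * nra.
Qed.

Lemma slit_lifts_tv_neq0 (y : R) (m : Z) : generic_height tv y ->
  In m (slit_lifts y) -> tv <> 0.
Proof.
  intros Hg Hm Z0; apply In_slit_lifts in Hm as [s [_ E]]; auto.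
  apply (proj1 Hg); exists m; rewrite E, Z0; ring.
Qed.

Lemma slit_abscissa_param (y s : R) (m : Z) : tv <> 0 ->
  y = s * tv + IZR m -> slit_abscissa y m = s * th.
Proof. intros Hz ->; unfold slit_abscissa; field; exact Hz. Qed.

Lemma on_slit_generic (x y : R) : generic_height tv y ->
  on_slit th tv x y <-> exists m, In m (slit_lifts y) /\ isZ (x - slit_abscissa y m).
Proof.
  intros Hg; split.
  - intros [s [m1 [m [Hs [Ex Ey]]]]]; destruct Hg as [Hy Hyv].
    assert (s <> 0) by (intros ->; apply Hy; exists m; rewrite Ey; ring).
    assert (s <> 1) by (intros ->; apply Hyv; exists m; rewrite Ey; ring).
    assert (tv <> 0) by (intros Z0; apply Hy; exists m; rewrite Ey, Z0; ring).
    exists m; split.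
    + apply In_slit_lifts; [split; auto|exists s; split; [lra|auto]].
    + rewrite (slit_abscissa_param y s) by auto; exists m1; lra.
  - intros [m [Hm [m1 Hm1]]].
    pose proof (slit_lifts_tv_neq0 y m Hg Hm) as Hz.
    apply In_slit_lifts in Hm as [s [Hs E]]; auto.
    rewrite (slit_abscissa_param y s m Hz E) in Hm1.
    exists s, m1, m; split; [lra|split; lra].
Qed.

Lemma on_slit_plus_IZR (x y : R) (a b : Z) :
  on_slit th tv (x + IZR a) (y + IZR b) <-> on_slit th tv x y.
Proof.
  split; intros [s [m1 [m2 [Hs [Ex Ey]]]]].
  - exists s, (m1 - a)%Z, (m2 - b)%Z; rewrite !minus_IZR; split; [auto|split; lra].
  - exists s, (m1 + a)%Z, (m2 + b)%Z; rewrite !plus_IZR; split; [auto|split; lra].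
Qed.

Lemma on_slit_plus_IZR_l (x y : R) (a : Z) :
  on_slit th tv (x + IZR a) y <-> on_slit th tv x y.
Proof. rewrite <- (on_slit_plus_IZR x y a 0), Rplus_0_r; reflexivity. Qed.

Lemma on_slit_plus_IZR_r (x y : R) (b : Z) :
  on_slit th tv x (y + IZR b) <-> on_slit th tv x y.
Proof. rewrite <- (on_slit_plus_IZR x y 0 b), Rplus_0_r; reflexivity. Qed.

Lemma generic_height_plus_IZR (y : R) (b : Z) :
  generic_height tv (y + IZR b) <-> generic_height tv y.
Proof.
  unfold generic_height; replace (y + IZR b - tv) with ((y - tv) + IZR b) by ring.
  now rewrite !isZ_plus_IZR.
Qed.

Lemma crossing_number_length (y : R) :
  (sgnZ tv * Z.of_nat (length (slit_lifts y)))%Z = crossing_number y.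
Proof.
  unfold sgnZ, slit_lifts, crossing_number.
  destruct (Rlt_dec 0 tv) as [H|H]; rewrite length_zrange.
  - pose proof (Int_part_le (y - tv) y ltac:(lra)); lia.
  - pose proof (Int_part_le y (y - tv) ltac:(lra)); lia.
Qed.

Lemma crossing_number_plus_IZR (y : R) (b : Z) :
  crossing_number (y + IZR b) = crossing_number y.
Proof.
  unfold crossing_number; replace (y + IZR b - tv) with ((y - tv) + IZR b) by ring.
  rewrite !Int_part_plus_IZR; lia.
Qed.

Lemma slit_lifts_plus_IZR (y : R) (b : Z) :
  slit_lifts (y + IZR b) = map (fun m => (m + b)%Z) (slit_lifts y).
Proof.
  unfold slit_lifts; replace (y + IZR b - tv) with ((y - tv) + IZR b) by ring.
  rewrite !Int_part_plus_IZR; destruct Rlt_dec; apply zrange_shift.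
Qed.

Lemma slit_lifts_same_band (y y' : R) : same_band tv y y' -> slit_lifts y = slit_lifts y'.
Proof. intros [E1 E2]; unfold slit_lifts; now rewrite E1, E2. Qed.

Lemma crossing_potential_plus_IZR (x y : R) (a b : Z) :
  crossing_potential (x + IZR a) (y + IZR b) =
  (crossing_potential x y + a * Z.of_nat (length (slit_lifts y)))%Z.
Proof.
  unfold crossing_potential; rewrite slit_lifts_plus_IZR, sumZ_map, <- sumZ_add_const.
  apply sumZ_ext; intros m _; unfold slit_abscissa; rewrite plus_IZR.
  replace (x + IZR a - th * ((y + IZR b - (IZR m + IZR b)) / tv))
    with ((x - th * ((y - IZR m) / tv)) + IZR a) by (unfold Rdiv; ring).
  apply Int_part_plus_IZR.
Qed.

Lemma crossing_potential_turns (x y : R) (m : Z) :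
  (sgnZ tv * (crossing_potential (x + IZR m) y - crossing_potential x y))%Z =
  (m * crossing_number y)%Z.
Proof.
  pose proof (crossing_potential_plus_IZR x y m 0) as E; rewrite Rplus_0_r in E.
  rewrite E, <- crossing_number_length; lia.
Qed.

End SlitCrossings.

Section HorizontalFlow.

Variables th tv : R.

Definition crossings (x y t : R) : list (Z * Z * R) :=
  flat_map (fun m =>
    map (fun m1 => (m1, m, slit_abscissa th tv y m + IZR m1 - x))
        (zrange (Int_part (x - slit_abscissa th tv y m))
                (Int_part (x + t - slit_abscissa th tv y m))))
    (slit_lifts tv y).

Lemma In_crossings (x y t : R) (c : Z * Z * R) : generic_height tv y ->
  ~ on_slit th tv x y -> ~ on_slit th tv (x + t) y ->
  In c (crossings x y t) <-> hcross th tv x y t c.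
Proof.
  intros Hg Hx Hxt; destruct c as [[m1 m] tau]; unfold crossings.
  rewrite in_flat_map; simpl.
  assert (Hend : forall m, In m (slit_lifts tv y) ->
            ~ isZ (x + t - slit_abscissa th tv y m)).
  { intros m' Hm' HZ; apply Hxt, on_slit_generic; eauto. }
  split.
  - intros [m' [Hm Hin]]; apply in_map_iff in Hin as [k [Ek Hk]].
    injection Ek as -> -> <-.
    pose proof (slit_lifts_tv_neq0 tv y m Hg Hm) as Hz.
    apply In_zrange in Hk as [K1 K2].
    apply Int_part_lt_iff in K1; apply IZR_lt_iff_le_Int_part in K2; auto.
    apply In_slit_lifts in Hm as [s [Hs E]]; auto.
    pose proof (slit_abscissa_param th tv y s m Hz E).
    split; [lra|exists s; split; [auto|split; lra]].
  - intros [Ht [s [Hs [Ex Ey]]]].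
    assert (Hm : In m (slit_lifts tv y)) by (apply In_slit_lifts; eauto).
    pose proof (slit_abscissa_param th tv y s m (slit_lifts_tv_neq0 tv y m Hg Hm) Ey).
    exists m; split; auto; apply in_map_iff; exists m1; split.
    + f_equal; lra.
    + apply In_zrange; split.
      * apply Int_part_lt_iff; lra.
      * apply IZR_lt_iff_le_Int_part; auto; lra.
Qed.

Lemma NoDup_crossings (x y t : R) : NoDup (crossings x y t).
Proof.
  apply NoDup_flat_map.
  - unfold slit_lifts; destruct Rlt_dec; apply NoDup_zrange.
  - intros m _; apply NoDup_map_inj; [|apply NoDup_zrange].
    intros u v E; now injection E.
  - intros a b c _ _ Ha Hb; apply in_map_iff in Ha as [u [<- _]].
    apply in_map_iff in Hb as [v [E _]]; now injection E.
Qed.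

Lemma length_crossings (x y t : R) : 0 <= t ->
  Z.of_nat (length (crossings x y t)) =
  (crossing_potential th tv (x + t) y - crossing_potential th tv x y)%Z.
Proof.
  intros Ht; unfold crossings, crossing_potential.
  rewrite length_flat_map_sumZ, <- sumZ_sub; apply sumZ_ext; intros m _.
  rewrite length_map, length_zrange.
  pose proof (Int_part_le (x - slit_abscissa th tv y m) (x + t - slit_abscissa th tv y m)
                ltac:(lra)); lia.
Qed.

Lemma hpath_ok_generic (x y t : R) : generic_height tv y -> hpath_ok th tv x y t.
Proof.
  intros [Hy Hyv]; split.
  - intros tau _ [[_ H]|[_ H]]; auto.
  - intros Z0 tau _ [s [m1 [m2 [_ [_ Ey]]]]].
    apply Hy; exists m2; rewrite Ey, Z0; ring.
Qed.

Lemma hmove_sheet (P Q : pt) (t : R) : generic_height tv (py P) -> hmove th tv P t Q ->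
  Q = Pt (sheet P + sgnZ tv * (crossing_potential th tv (px P + t) (py P)
                                - crossing_potential th tv (px P) (py P)))%Z
         (px P + t) (py P).
Proof.
  intros Hg [Ht [Hx [Hxt [_ [l [Hl [Hiff ->]]]]]]].
  do 3 f_equal; rewrite <- length_crossings by exact Ht.
  enough (length l = length (crossings (px P) (py P) t)) by lia.
  apply Nat.le_antisymm; apply NoDup_incl_length; auto using NoDup_crossings;
    intros c Hc; [apply In_crossings, Hiff|apply Hiff, In_crossings]; auto.
Qed.

Lemma hmove_generic (j : Z) (x y t : R) : generic_height tv y -> 0 <= t ->
  ~ on_slit th tv x y -> ~ on_slit th tv (x + t) y ->
  hmove th tv (Pt j x y) t
    (Pt (j + sgnZ tv * (crossing_potential th tv (x + t) y
                        - crossing_potential th tv x y))%Z (x + t) y).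
Proof.
  intros Hg Ht Hx Hxt; repeat split; auto; try apply hpath_ok_generic; auto.
  exists (crossings x y t); split; [apply NoDup_crossings|split].
  - intros c; now apply In_crossings.
  - now rewrite <- length_crossings.
Qed.

Lemma hmove_turns (j : Z) (x y : R) (m : Z) : generic_height tv y -> (0 <= m)%Z ->
  ~ on_slit th tv x y ->
  hmove th tv (Pt j x y) (IZR m) (Pt (j + m * crossing_number tv y)%Z (x + IZR m) y).
Proof.
  intros Hg Hm Hx; rewrite <- (crossing_potential_turns th tv x y m).
  apply hmove_generic; auto.
  - now apply IZR_le in Hm.
  - now rewrite on_slit_plus_IZR_l.
Qed.

End HorizontalFlow.

Lemma grid_near_unique (K j1 j2 : nat) (p : R) (z1 z2 : Z) :
  (j1 <= K)%nat -> (j2 <= K)%nat ->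
  Rabs (INR j1 / (INR K + 1) - p - IZR z1) < / (2 * (INR K + 1)) ->
  Rabs (INR j2 / (INR K + 1) - p - IZR z2) < / (2 * (INR K + 1)) ->
  j1 = j2.
Proof.
  intros H1 H2 N1 N2; pose proof (pos_INR K).
  apply Rabs_def2 in N1, N2.
  set (w := (Z.of_nat j1 - Z.of_nat j2 - (Z.of_nat K + 1) * (z1 - z2))%Z).
  assert (Ew : IZR w = (INR K + 1) * ((INR j1 / (INR K + 1) - p - IZR z1)
                                      - (INR j2 / (INR K + 1) - p - IZR z2))).
  { unfold w; rewrite !minus_IZR, mult_IZR, plus_IZR, minus_IZR, <- !INR_IZR_INZ.
    simpl; field; lra. }
  assert (Hw : -1 < IZR w < 1).
  { rewrite Ew; replace (/ (2 * (INR K + 1))) with (/ 2 * / (INR K + 1)) in * by (field; lra).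
    assert (E : (INR K + 1) * / (INR K + 1) = 1) by (field; lra).
    split; nra. }
  destruct Hw as [Hw1 Hw2]; apply lt_IZR in Hw1, Hw2.
  assert (w = 0%Z) as Hw0 by lia; unfold w in Hw0.
  destruct (Z.eq_dec (z1 - z2) 0) as [E|E]; [rewrite E in Hw0; lia|].
  assert (Z.abs ((Z.of_nat K + 1) * (z1 - z2)) >= Z.of_nat K + 1)%Z
    by (rewrite Z.abs_mul, (Z.abs_eq (Z.of_nat K + 1)) by lia; nia).
  lia.
Qed.

Lemma exists_far_from_translates (L : list Z) (pos : Z -> R) :
  exists x, forall m, In m L -> forall z : Z,
    / (2 * (INR (length L) + 1)) <= Rabs (x - pos m - IZR z).
Proof.
  set (K := length L); pose proof (pos_INR K).
  (* among the K + 1 grid points j / (K + 1), each translate of L is near at most one *)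
  apply NNPP; intros Hnone.
  assert (Hnear : forall j, exists m, (j <= K)%nat -> In m L /\ exists z,
            Rabs (INR j / (INR K + 1) - pos m - IZR z) < / (2 * (INR K + 1))).
  { intros j; destruct (le_lt_dec j K) as [Hj|Hj]; [|exists 0%Z; lia].
    apply NNPP; intros Hfar; apply Hnone; exists (INR j / (INR K + 1)).
    intros m Hm z; apply Rnot_lt_le; intros Hlt; apply Hfar.
    exists m; split; eauto. }
  destruct (choice _ Hnear) as [f Hf].
  assert (Hinj : NoDup (map f (seq 0 (S K)))).
  { apply NoDup_map_NoDup_ForallPairs; [|apply seq_NoDup].
    intros a b Ha Hb Eab; apply in_seq in Ha, Hb.
    destruct (Hf a ltac:(lia)) as [_ [za Na]], (Hf b ltac:(lia)) as [_ [zb Nb]].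
    rewrite Eab in Na; apply (grid_near_unique K a b (pos (f b)) za zb); auto; lia. }
  apply NoDup_incl_length with (l' := L) in Hinj.
  - rewrite length_map, length_seq in Hinj; unfold K in Hinj; lia.
  - intros m Hm; apply in_map_iff in Hm as [j [<- Hj]]; apply in_seq in Hj.
    apply Hf; lia.
Qed.

Definition slit_clearance (tv y : R) : R := / (2 * (INR (length (slit_lifts tv y)) + 1)).

Lemma slit_clearance_pos (tv y : R) : 0 < slit_clearance tv y.
Proof.
  unfold slit_clearance; pose proof (pos_INR (length (slit_lifts tv y))).
  apply Rinv_0_lt_compat; lra.
Qed.

Lemma exists_off_slit (th tv y : R) : generic_height tv y -> exists x, ~ on_slit th tv x y.
Proof.
  intros Hg.
  destruct (exists_far_from_translates (slit_lifts tv y) (slit_abscissa th tv y)) as [x Hx].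
  exists x; intros Hs; apply on_slit_generic in Hs as [m [Hm [z Hz]]]; auto.
  specialize (Hx m Hm z); rewrite Hz, Rminus_diag, Rabs_R0 in Hx.
  pose proof (slit_clearance_pos tv y); unfold slit_clearance in *; lra.
Qed.

(** * The cylinder invariant *)

Section Cylinders.

Variables (d : nat) (th tv : R).

Lemma reg_closed_generic (P : pt) : reg_closed d th tv P ->
  generic_height tv (py P) /\ ~ on_slit th tv (px P) (py P).
Proof.
  intros [Hx [T [Q [HT [[_ [_ [_ [[Hsing _] [l [_ [_ EQ]]]]]]] [_ [[z Hz] _]]]]]]].
  split; [|exact Hx].
  rewrite EQ in Hz; simpl in Hz.
  assert (1 <= T).
  { replace T with (IZR z) in * by lra; apply IZR_le; apply lt_IZR in HT; lia. }
  (* a horizontal leaf of length >= 1 at an integral height meets a cone point *)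
  split; intros Hy.
  - destruct (Int_part_bounds (px P)).
    apply (Hsing (IZR (Int_part (px P) + 1) - px P)); [rewrite plus_IZR; lra|].
    left; split; auto.
    replace (px P + _) with (IZR (Int_part (px P) + 1)) by ring; apply isZ_IZR.
  - destruct (Int_part_bounds (px P - th)).
    apply (Hsing (IZR (Int_part (px P - th) + 1) - (px P - th))); [rewrite plus_IZR; lra|].
    right; split; auto.
    replace (px P + _ - th) with (IZR (Int_part (px P - th) + 1)) by ring; apply isZ_IZR.
Qed.

Lemma same_pt_of_eq (P Q : pt) (w a b : Z) :
  sheet P = (sheet Q + w * Z.of_nat d)%Z -> px P = px Q + IZR a -> py P = py Q + IZR b ->
  same_pt d P Q.
Proof.
  intros Hs Hx Hy; split; [|split].
  - rewrite Hs, Z.add_simpl_l; apply Z_mod_mult.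
  - exists a; lra.
  - exists b; lra.
Qed.

Hypothesis d_pos : (0 < d)%nat.

Lemma generic_reg_closed (j : Z) (x y : R) : generic_height tv y -> ~ on_slit th tv x y ->
  reg_closed d th tv (Pt j x y).
Proof.
  intros Hg Hx; split; [exact Hx|].
  exists (IZR (Z.of_nat d)); eexists; split; [apply IZR_lt; lia|split].
  - apply hmove_turns; auto; lia.
  - apply (same_pt_of_eq _ _ (crossing_number tv y) (Z.of_nat d) 0); simpl; ring.
Qed.

Definition cylinder_invariant (P : pt) : Z * Z :=
  let k := crossing_number tv (py P) in
  (k, ((sheet P - sgnZ tv * crossing_potential th tv (px P) (py P))
         mod Z.gcd k (Z.of_nat d))%Z).

Lemma same_pt_invariant (P Q : pt) :
  same_pt d P Q -> cylinder_invariant P = cylinder_invariant Q.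
Proof.
  destruct P as [j x y], Q as [j' x' y']; intros [Hs [[a Ha] [b Hb]]]; simpl in *.
  replace x with (x' + IZR a) by lra; replace y with (y' + IZR b) by lra.
  unfold cylinder_invariant; simpl.
  rewrite crossing_number_plus_IZR, crossing_potential_plus_IZR; f_equal.
  set (k := crossing_number tv y'); set (g := Z.gcd k (Z.of_nat d)).
  pose proof (Z_gcd_nat_pos k d d_pos) as Hg.
  apply Z.mod_divide in Hs as [w Hw]; [|lia].
  destruct (Z.gcd_divide_l k (Z.of_nat d)) as [k' Hk].
  destruct (Z.gcd_divide_r k (Z.of_nat d)) as [d' Hd].
  pose proof (crossing_number_length tv y') as Hlen; fold k in Hlen.
  fold g in Hk, Hd; clearbody k g.
  assert (Ej : j = (j' + w * Z.of_nat d)%Z) by lia.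
  assert (Ea : (sgnZ tv * (a * Z.of_nat (length (slit_lifts tv y'))) = a * k)%Z)
    by (rewrite <- Hlen; ring).
  replace (j - sgnZ tv * (crossing_potential th tv x' y' + a * _))%Z
    with ((j' - sgnZ tv * crossing_potential th tv x' y') + (w * d' - a * k') * g)%Z.
  - apply Z.mod_add; lia.
  - rewrite Z.mul_add_distr_l, Ea, Ej, Hk, Hd; ring.
Qed.

Lemma crossing_potential_vertical (j : Z) (x y y' : R) :
  (forall u, Rmin y y' <= u <= Rmax y y' -> reg_closed d th tv (Pt j x u)) ->
  same_band tv y y' /\ crossing_potential th tv x y = crossing_potential th tv x y'.
Proof.
  intros Hreg.
  assert (Hgen : forall u, Rmin y y' <= u <= Rmax y y' ->
                   generic_height tv u /\ ~ on_slit th tv x u)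
    by (intros u Hu; exact (reg_closed_generic (Pt j x u) (Hreg u Hu))).
  assert (Hband : forall u, Rmin y y' <= u <= Rmax y y' -> same_band tv y u)
    by (apply same_band_on_generic_segment; intros; apply Hgen; auto).
  assert (Hy' : Rmin y y' <= y' <= Rmax y y') by (unfold Rmin, Rmax; destruct Rle_dec; lra).
  split; [now apply Hband|].
  unfold crossing_potential; rewrite <- (slit_lifts_same_band tv y y' (Hband y' Hy')).
  apply sumZ_ext; intros m Hm; apply Int_part_const_on_segment; intros l Hl HZ.
  pose proof (segment_between y y' l Hl) as Hu; set (u := y + l * (y' - y)) in Hu.
  apply (proj2 (Hgen u Hu)), on_slit_generic; [apply Hgen; auto|].
  exists m; split.
  - now rewrite <- (slit_lifts_same_band tv y u (Hband u Hu)).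
  - replace (x - slit_abscissa th tv u m) with
      (x - slit_abscissa th tv y m
       + l * (x - slit_abscissa th tv y' m - (x - slit_abscissa th tv y m)))
      by (unfold u, slit_abscissa, Rdiv; ring).
    exact HZ.
Qed.

Lemma cyl_step_invariant (P Q : pt) :
  cyl_step d th tv P Q -> cylinder_invariant P = cylinder_invariant Q.
Proof.
  intros [HP [_ [Hpt | [[t Hm] | [Hs [Hx Hv]]]]]].
  - now apply same_pt_invariant.
  - rewrite (hmove_sheet th tv P Q t (proj1 (reg_closed_generic P HP)) Hm).
    unfold cylinder_invariant; simpl; do 2 f_equal; ring.
  - destruct (crossing_potential_vertical (sheet P) (px P) (py P) (py Q) Hv)
      as [[E1 E2] E3].
    unfold cylinder_invariant, crossing_number; now rewrite Hs, Hx, E1, E2, E3.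
Qed.

Lemma same_cyl_invariant (P Q : pt) :
  same_cyl d th tv P Q -> cylinder_invariant P = cylinder_invariant Q.
Proof.
  induction 1; auto using cyl_step_invariant; congruence.
Qed.

(** * Connecting regular points *)

Lemma same_cyl_hmove (P Q : pt) (t : R) :
  hmove th tv P t Q -> generic_height tv (py P) -> same_cyl d th tv P Q.
Proof.
  intros Hm Hg; pose proof (hmove_sheet th tv P Q t Hg Hm) as EQ.
  pose proof Hm as [_ [Hx [Hxt _]]].
  apply rst_step; split; [|split; [|right; left; eauto]].
  - destruct P; now apply generic_reg_closed.
  - rewrite EQ; now apply generic_reg_closed.
Qed.

Lemma same_cyl_same_pt (P Q : pt) (w a b : Z) :
  generic_height tv (py P) -> ~ on_slit th tv (px P) (py P) ->
  sheet Q = (sheet P + w * Z.of_nat d)%Z -> px Q = px P + IZR a -> py Q = py P + IZR b ->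
  same_cyl d th tv P Q.
Proof.
  destruct P as [j x y], Q as [j' x' y']; simpl; intros Hg Hx -> -> ->.
  apply rst_step; split; [|split].
  - now apply generic_reg_closed.
  - apply generic_reg_closed; [apply generic_height_plus_IZR|rewrite on_slit_plus_IZR]; auto.
  - left; apply (same_pt_of_eq _ _ (- w) (- a) (- b)); simpl; rewrite ?opp_IZR; lia || lra.
Qed.

Lemma same_cyl_vertical_step (j : Z) (x y1 y2 : R) :
  generic_height tv y1 -> generic_height tv y2 -> same_band tv y1 y2 ->
  ~ on_slit th tv x y1 -> Rabs (th / tv * (y2 - y1)) < slit_clearance tv y1 ->
  exists j' x', same_cyl d th tv (Pt j x y1) (Pt j' x' y2) /\ ~ on_slit th tv x' y2.
Proof.
  intros G1 G2 B12 Hx Hsmall.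
  destruct (exists_far_from_translates (slit_lifts tv y1) (slit_abscissa th tv y1))
    as [xf Hfar].
  (* along the segment the slit drifts by less than the clearance of [xf] *)
  set (x' := xf + IZR (Int_part (x - xf) + 1)).
  assert (Hclear : forall u, Rmin y1 y2 <= u <= Rmax y1 y2 ->
                     generic_height tv u /\ ~ on_slit th tv x' u).
  { intros u Hu; destruct (generic_between tv y1 y2 u G1 G2 B12 Hu) as [Gu B1u].
    split; [exact Gu|]; intros Hs; apply on_slit_generic in Hs as [m [Hm [z Hz]]]; auto.
    rewrite <- (slit_lifts_same_band tv y1 u B1u) in Hm.
    specialize (Hfar m Hm (z - (Int_part (x - xf) + 1))%Z).
    replace (xf - slit_abscissa th tv y1 m - IZR (z - (Int_part (x - xf) + 1)))
      with (th / tv * (u - y1)) in Hfar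
      by (rewrite minus_IZR, <- Hz; unfold x', slit_abscissa, Rdiv; ring).
    pose proof (Rabs_mult_between (th / tv) y1 y2 u Hu).
    unfold slit_clearance in *; lra. }
  assert (Hy1 : Rmin y1 y2 <= y1 <= Rmax y1 y2) by (unfold Rmin, Rmax; destruct Rle_dec; lra).
  assert (Hy2 : Rmin y1 y2 <= y2 <= Rmax y1 y2) by (unfold Rmin, Rmax; destruct Rle_dec; lra).
  assert (Ht : 0 <= x' - x)
    by (unfold x'; rewrite plus_IZR; destruct (Int_part_bounds (x - xf)); lra).
  pose proof (hmove_generic th tv j x y1 (x' - x) G1 Ht Hx) as Hm.
  replace (x + (x' - x)) with x' in Hm by ring.
  specialize (Hm (proj2 (Hclear y1 Hy1))).
  set (j' := (j + _)%Z) in Hm.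
  exists j', x'; split; [|apply Hclear; auto].
  apply rst_trans with (Pt j' x' y1); [now apply same_cyl_hmove with (x' - x)|].
  apply rst_step; split; [|split]; try (apply generic_reg_closed; apply Hclear; auto).
  right; right; split; [reflexivity|split; [reflexivity|]].
  intros u Hu; apply generic_reg_closed; apply Hclear; auto.
Qed.

Lemma same_cyl_vertical (N : nat) : forall (j : Z) (x y1 y2 : R),
  generic_height tv y1 -> generic_height tv y2 -> same_band tv y1 y2 ->
  ~ on_slit th tv x y1 -> Rabs (th / tv * (y2 - y1)) <= INR N * (slit_clearance tv y1 / 2) ->
  exists j' x', same_cyl d th tv (Pt j x y1) (Pt j' x' y2) /\ ~ on_slit th tv x' y2.
Proof.
  pose proof (slit_clearance_pos tv) as Hr.
  induction N as [|N IH]; intros j x y1 y2 G1 G2 B12 Hx Hsmall.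
  - apply same_cyl_vertical_step; auto; specialize (Hr y1); simpl in Hsmall; lra.
  - (* first step to [y' = y1 + (y2 - y1) / (N + 1)], then [N] steps *)
    set (M := INR (S N)) in Hsmall; set (D := th / tv * (y2 - y1)) in Hsmall.
    assert (HM : 1 <= M) by (unfold M; rewrite S_INR; pose proof (pos_INR N); lra).
    set (l := / M).
    assert (Hl : l * M = 1) by (unfold l; field; lra).
    assert (Hl01 : 0 < l <= 1) by (split; [apply Rinv_0_lt_compat|]; nra).
    pose proof (segment_between y1 y2 l ltac:(lra)) as Hy'.
    set (y' := y1 + l * (y2 - y1)) in Hy'.
    destruct (generic_between tv y1 y2 y' G1 G2 B12 Hy') as [G' B1'].
    set (r := slit_clearance tv y1) in Hsmall; specialize (Hr y1); fold r in Hr.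
    assert (HlD : l * Rabs D <= r / 2).
    { replace (r / 2) with (l * (M * (r / 2))) by (rewrite <- Rmult_assoc, Hl; ring).
      apply Rmult_le_compat_l; lra. }
    assert (HlD' : (1 - l) * Rabs D <= INR N * (r / 2)).
    { replace (INR N * (r / 2)) with ((1 - l) * (M * (r / 2))).
      - apply Rmult_le_compat_l; lra.
      - replace (INR N) with (M - 1) by (unfold M; rewrite S_INR; ring).
        replace ((1 - l) * (M * (r / 2))) with (M * (r / 2) - (l * M) * (r / 2)) by ring.
        rewrite Hl; ring. }
    destruct (same_cyl_vertical_step j x y1 y' G1 G' B1' Hx) as [j1 [x1 [C1 Hx1]]].
    { replace (th / tv * (y' - y1)) with (l * D) by (unfold y', D; ring).
      rewrite Rabs_mult, Rabs_pos_eq by lra; fold r; lra. }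
    destruct (IH j1 x1 y' y2 G' G2) as [j2 [x2 [C2 Hx2]]]; auto.
    { destruct B12, B1'; split; congruence. }
    { replace (th / tv * (y2 - y')) with ((1 - l) * D) by (unfold y', D; ring).
      unfold slit_clearance; rewrite <- (slit_lifts_same_band tv y1 y' B1').
      fold (slit_clearance tv y1); fold r.
      rewrite Rabs_mult, Rabs_pos_eq by lra; exact HlD'. }
    exists j2, x2; split; auto; now apply rst_trans with (Pt j1 x1 y').
Qed.

Lemma same_cyl_within_band (j : Z) (x y1 y2 : R) :
  generic_height tv y1 -> generic_height tv y2 -> same_band tv y1 y2 ->
  ~ on_slit th tv x y1 ->
  exists j' x', same_cyl d th tv (Pt j x y1) (Pt j' x' y2) /\ ~ on_slit th tv x' y2.
Proof.
  intros; destruct (exists_nat_mult_ge (Rabs (th / tv * (y2 - y1)))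
                      (slit_clearance tv y1 / 2)) as [N HN].
  - pose proof (slit_clearance_pos tv y1); lra.
  - now apply (same_cyl_vertical N).
Qed.

Lemma same_cyl_to_abscissa (j : Z) (x x0 y : R) : generic_height tv y ->
  ~ on_slit th tv x y -> ~ on_slit th tv x0 y -> exists j', same_cyl d th tv (Pt j x y) (Pt j' x0 y).
Proof.
  intros Hg Hx Hx0.
  set (f := Int_part (x0 - x)); destruct (Int_part_bounds (x0 - x)) as [F _]; fold f in F.
  assert (Ht : 0 <= x0 - IZR f - x) by lra.
  assert (Hend : ~ on_slit th tv (x + (x0 - IZR f - x)) y).
  { replace (x + (x0 - IZR f - x)) with (x0 + IZR (- f)) by (rewrite opp_IZR; ring).
    now rewrite on_slit_plus_IZR_l. }
  pose proof (hmove_generic th tv j x y _ Hg Ht Hx Hend) as Hm.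
  eexists; eapply rst_trans; [exact (same_cyl_hmove _ _ _ Hm Hg)|].
  apply (same_cyl_same_pt _ _ 0 f 0); simpl; auto; ring.
Qed.

Lemma same_cyl_turns (j : Z) (x y : R) (m : Z) : generic_height tv y ->
  ~ on_slit th tv x y -> (0 <= m)%Z ->
  same_cyl d th tv (Pt j x y) (Pt (j + m * crossing_number tv y) x y).
Proof.
  intros Hg Hx Hm.
  eapply rst_trans; [exact (same_cyl_hmove _ _ _ (hmove_turns th tv j x y m Hg Hm Hx) Hg)|].
  apply (same_cyl_same_pt _ _ 0 (- m) 0); simpl; rewrite ?opp_IZR; try ring; auto.
  now rewrite on_slit_plus_IZR_l.
Qed.

Lemma same_cyl_sheet_gcd (j : Z) (x y : R) (z : Z) : generic_height tv y ->
  ~ on_slit th tv x y ->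
  same_cyl d th tv (Pt j x y)
    (Pt (j + z * Z.gcd (crossing_number tv y) (Z.of_nat d)) x y).
Proof.
  intros Hg Hx; set (k := crossing_number tv y).
  destruct (Zis_gcd_bezout _ _ _ (Zgcd_is_gcd k (Z.of_nat d))) as [u v Huv].
  (* a multiple of the gcd is [m k] modulo [d] for some [m >= 0] *)
  set (m := ((z * u) mod Z.of_nat d)%Z); set (q := ((z * u) / Z.of_nat d)%Z).
  assert (Em : (z * u = Z.of_nat d * q + m)%Z) by (apply Z.div_mod; lia).
  assert (Hm : (0 <= m)%Z) by (apply Z.mod_pos_bound; lia).
  eapply rst_trans; [exact (same_cyl_turns j x y m Hg Hx Hm)|].
  apply (same_cyl_same_pt _ _ (q * k + z * v) 0 0); simpl; auto; try ring.
  fold k; rewrite <- Huv; replace (z * (u * k + v * Z.of_nat d))%Z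
    with ((z * u) * k + z * v * Z.of_nat d)%Z by ring.
  rewrite Em; ring.
Qed.

(** * The cylinders with a given crossing number *)

Lemma leaf_width_generic (j : Z) (x y : R) : generic_height tv y -> ~ on_slit th tv x y ->
  leaf_width d th tv (Pt j x y) (INR d / IZR (Z.gcd (crossing_number tv y) (Z.of_nat d))).
Proof.
  intros Hg Hx; set (k := crossing_number tv y); set (g := Z.gcd k (Z.of_nat d)).
  pose proof (Z_gcd_nat_pos k d d_pos) as Hgpos; fold g in Hgpos.
  destruct (Z.gcd_divide_r k (Z.of_nat d)) as [d' Hd']; fold g in Hd'.
  destruct (Z.gcd_divide_l k (Z.of_nat d)) as [k' Hk']; fold g in Hk'.
  assert (Hw : INR d / IZR g = IZR d')
    by (rewrite INR_IZR_INZ, Hd', mult_IZR; field; apply not_0_IZR; lia).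
  rewrite Hw; split; [apply IZR_lt; nia|split].
  - exists (Pt (j + d' * k) (x + IZR d') y); split; [apply hmove_turns; auto; nia|].
    apply (same_pt_of_eq _ _ k' d' 0); simpl; [rewrite Hk', Hd'| |]; ring.
  - (* a shorter closed leaf would make [d] divide [z k] for some [0 < z < d / g] *)
    intros t Q [Ht1 Ht2] Hm [Hs [[z Hz] _]].
    rewrite (hmove_sheet th tv (Pt j x y) Q t Hg Hm) in Hs, Hz; simpl in Hs, Hz.
    replace t with (IZR z) in * by lra; apply lt_IZR in Ht1, Ht2.
    rewrite crossing_potential_turns, Z.add_simpl_l in Hs; fold k in Hs.
    apply Z.mod_divide in Hs; [|lia].
    apply Z_divide_mul_div_gcd in Hs; [|lia].
    fold g in Hs; rewrite Hd', Z.div_mul in Hs by lia.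
    apply Z.divide_pos_le in Hs; lia.
Qed.

Lemma same_cyl_crossing_number (P Q : pt) :
  same_cyl d th tv P Q -> crossing_number tv (py P) = crossing_number tv (py Q).
Proof. intros H; exact (f_equal fst (same_cyl_invariant P Q H)). Qed.

(* The [r]-th representative has invariant [(k, r)]. *)
Definition cylinder_reps (x0 y0 : R) : list (pt * R) :=
  let g := Z.gcd (crossing_number tv y0) (Z.of_nat d) in
  map (fun r => (Pt (r + sgnZ tv * crossing_potential th tv x0 y0) x0 y0, INR d / IZR g))
      (zrange (-1) (g - 1)).

Definition horizontal_cylinders_at (k : Z) (cs : list (pt * R)) : Prop :=
  (forall c, In c cs -> reg_closed d th tv (fst c) /\
     leaf_width d th tv (fst c) (snd c) /\ crossing_number tv (py (fst c)) = k) /\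
  ForallOrdPairs (fun c c' => ~ same_cyl d th tv (fst c) (fst c')) cs /\
  (forall P, reg_closed d th tv P -> crossing_number tv (py P) = k ->
     exists c, In c cs /\ same_cyl d th tv P (fst c)).

Lemma cylinder_reps_cover (x0 y0 : R) (P : pt) :
  generic_height tv y0 -> ~ on_slit th tv x0 y0 -> Int_part y0 = 0%Z ->
  reg_closed d th tv P -> crossing_number tv (py P) = crossing_number tv y0 ->
  exists c, In c (cylinder_reps x0 y0) /\ same_cyl d th tv P (fst c).
Proof.
  intros G0 Hx0 F0 HP Hk; destruct (reg_closed_generic P HP) as [GP HxP].
  destruct P as [j x y]; simpl in *.
  set (y1 := y + IZR (- Int_part y)).
  assert (G1 : generic_height tv y1) by (unfold y1; now apply generic_height_plus_IZR).
  assert (Hx1 : ~ on_slit th tv x y1) by (unfold y1; now rewrite on_slit_plus_IZR_r).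
  assert (B10 : same_band tv y1 y0).
  { rewrite <- (crossing_number_plus_IZR tv y (- Int_part y)) in Hk; fold y1 in Hk.
    assert (Int_part y1 = 0%Z) by (unfold y1; rewrite Int_part_plus_IZR; lia).
    unfold crossing_number in Hk; split; lia. }
  destruct (same_cyl_within_band j x y1 y0 G1 G0 B10 Hx1) as [j1 [x1 [C1 Hx1']]].
  destruct (same_cyl_to_abscissa j1 x1 x0 y0 G0 Hx1' Hx0) as [j2 C2].
  set (g := Z.gcd (crossing_number tv y0) (Z.of_nat d)).
  set (c0 := (sgnZ tv * crossing_potential th tv x0 y0)%Z).
  pose proof (Z_gcd_nat_pos (crossing_number tv y0) d d_pos) as Hg; fold g in Hg.
  set (r := ((j2 - c0) mod g)%Z).
  pose proof (same_cyl_sheet_gcd j2 x0 y0 (- ((j2 - c0) / g)) G0 Hx0) as C3; fold g in C3.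
  replace (j2 + - ((j2 - c0) / g) * g)%Z with (r + c0)%Z in C3
    by (unfold r; rewrite Z.mod_eq by lia; ring).
  exists (Pt (r + c0) x0 y0, INR d / IZR g); split.
  - apply in_map_iff; exists r; split; [reflexivity|].
    apply In_zrange; pose proof (Z.mod_pos_bound (j2 - c0) g Hg); unfold r; lia.
  - simpl; apply rst_trans with (Pt j x y1);
      [apply (same_cyl_same_pt _ _ 0 0 (- Int_part y)); simpl; auto; ring|].
    apply rst_trans with (Pt j1 x1 y0); auto.
    now apply rst_trans with (Pt j2 x0 y0).
Qed.

Lemma cylinder_reps_spec (x0 y0 : R) :
  generic_height tv y0 -> ~ on_slit th tv x0 y0 -> Int_part y0 = 0%Z ->
  let g := Z.gcd (crossing_number tv y0) (Z.of_nat d) in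
  length (cylinder_reps x0 y0) = Z.to_nat g /\
  Forall (fun c => snd c = INR d / IZR g) (cylinder_reps x0 y0) /\
  horizontal_cylinders_at (crossing_number tv y0) (cylinder_reps x0 y0).
Proof.
  intros G0 Hx0 F0 g; pose proof (Z_gcd_nat_pos (crossing_number tv y0) d d_pos) as Hg.
  fold g in Hg; unfold cylinder_reps; fold g.
  split; [rewrite length_map, length_zrange; f_equal; lia|].
  split; [apply Forall_forall; intros c Hc; apply in_map_iff in Hc as [r [<- _]]; auto|].
  split; [|split].
  - intros c Hc; apply in_map_iff in Hc as [r [<- _]]; simpl.
    split; [now apply generic_reg_closed|split; [now apply leaf_width_generic|reflexivity]].
  - apply ForallOrdPairs_of_NoDup_map with (f := fun c => cylinder_invariant (fst c)).
    { intros a b Hab C; exact (Hab (same_cyl_invariant _ _ C)). }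
    rewrite map_map.
    rewrite (map_ext_in _ (fun r => (crossing_number tv y0, r))).
    + apply NoDup_map_inj; [intros u v E; now injection E|apply NoDup_zrange].
    + intros r Hr; apply In_zrange in Hr.
      unfold cylinder_invariant; simpl; fold g; f_equal.
      rewrite Z.add_simpl_r; apply Z.mod_small; lia.
  - intros P HP Hk; now apply cylinder_reps_cover.
Qed.

Lemma horizontal_cylinders_at_exist (y0 : R) (m : nat) :
  generic_height tv y0 -> Int_part y0 = 0%Z ->
  Z.gcd (crossing_number tv y0) (Z.of_nat d) = Z.of_nat m ->
  exists cs, length cs = m /\ Forall (fun c => snd c = INR d / INR m) cs /\
    horizontal_cylinders_at (crossing_number tv y0) cs.
Proof.
  intros G0 F0 Hm; destruct (exists_off_slit th tv y0 G0) as [x0 Hx0].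
  destruct (cylinder_reps_spec x0 y0 G0 Hx0 F0) as [Hlen [Hw Hcyl]].
  rewrite Hm, Nat2Z.id, <- INR_IZR_INZ in *.
  now exists (cylinder_reps x0 y0).
Qed.

Lemma horizontal_cylinders_of_class (k : Z) (cs : list (pt * R)) :
  horizontal_cylinders_at k cs ->
  (forall P, reg_closed d th tv P -> crossing_number tv (py P) = k) ->
  horizontal_cylinders d th tv cs.
Proof.
  intros [Hcs [Hdisj Hcov]] Hk; split; [|split]; auto.
  - intros c Hc; now destruct (Hcs c Hc) as [? [? _]].
Qed.

Lemma horizontal_cylinders_of_two_classes (k k' : Z) (A B : list (pt * R)) : k <> k' ->
  horizontal_cylinders_at k A -> horizontal_cylinders_at k' B ->
  (forall P, reg_closed d th tv P ->
     crossing_number tv (py P) = k \/ crossing_number tv (py P) = k') ->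
  horizontal_cylinders d th tv (A ++ B).
Proof.
  intros Hkk [HA [DA CA]] [HB [DB CB]] Hk; split; [|split].
  - intros c Hc; apply in_app_or in Hc as [Hc|Hc];
      [destruct (HA c Hc) as [? [? _]]|destruct (HB c Hc) as [? [? _]]]; auto.
  - apply ForallOrdPairs_app; auto.
    intros a b Ha Hb C; apply Hkk.
    destruct (HA a Ha) as [_ [_ <-]], (HB b Hb) as [_ [_ <-]].
    now apply same_cyl_crossing_number.
  - intros P HP; destruct (Hk P HP) as [E|E];
      [destruct (CA P HP E) as [c [Hc C]]|destruct (CB P HP E) as [c [Hc C]]];
      exists c; split; auto; apply in_or_app; auto.
Qed.

End Cylinders.

(** * Crossing numbers in the cylinders of the modular fiber *)

Lemma crossing_number_at (tv y : R) (n : Z) : 0 < y < 1 -> IZR n < y - tv < IZR n + 1 ->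
  generic_height tv y /\ Int_part y = 0%Z /\ crossing_number tv y = (- n)%Z.
Proof.
  intros Hy Hyv.
  assert (F : Int_part y = 0%Z) by (apply Int_part_eq; simpl; lra).
  assert (Fv : Int_part (y - tv) = n) by (apply Int_part_eq; lra).
  split; [split|split; [exact F|unfold crossing_number; lia]].
  - intros HZ; apply isZ_Int_part in HZ; rewrite F in HZ; simpl in HZ; lra.
  - intros HZ; apply isZ_Int_part in HZ; rewrite Fv in HZ; lra.
Qed.

Lemma crossing_number_open_band (tv y : R) (n : Z) : IZR n < tv < IZR n + 1 ->
  crossing_number tv y = n \/ crossing_number tv y = (n + 1)%Z.
Proof.
  intros Htv; unfold crossing_number.
  assert ((Int_part y + (- n - 1) <= Int_part (y - tv))%Z).
  { rewrite <- Int_part_plus_IZR; apply Int_part_le; rewrite minus_IZR, opp_IZR; lra. }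
  assert ((Int_part (y - tv) <= Int_part y + - n)%Z).
  { rewrite <- Int_part_plus_IZR; apply Int_part_le; rewrite opp_IZR; lra. }
  lia.
Qed.

Lemma crossing_number_integral_tv (y : R) (n : Z) : crossing_number (IZR n) y = n.
Proof.
  unfold crossing_number; replace (y - IZR n) with (y + IZR (- n)) by (rewrite opp_IZR; ring).
  rewrite Int_part_plus_IZR; lia.
Qed.

Theorem mainTheorem8 (d i : nat) (th tv : R) :
  (2 <= d)%nat -> (i < d)%nat ->
  (in_Ci d i th tv ->
     exists A B : list (pt * R),
       length A = Nat.gcd i d /\ length B = Nat.gcd (i + 1) d /\
       Forall (fun c => snd c = INR d / INR (Nat.gcd i d)) A /\
       Forall (fun c => snd c = INR d / INR (Nat.gcd (i + 1) d)) B /\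
       horizontal_cylinders d th tv (A ++ B)) /\
  (in_btm_Ci d i th tv ->
     exists A : list (pt * R),
       length A = Nat.gcd i d /\
       Forall (fun c => snd c = INR d / INR (Nat.gcd i d)) A /\
       horizontal_cylinders d th tv A).
Proof.
  intros Hd _; assert (d_pos : (0 < d)%nat) by lia; split.
  - intros [n [Htv Hmod]].
    destruct (crossing_number_at tv ((1 + tv - IZR n) / 2) (- n)) as [GA [FA KA]];
      [lra|rewrite opp_IZR; lra|rewrite Z.opp_involutive in KA].
    destruct (crossing_number_at tv ((tv - IZR n) / 2) (- n - 1)) as [GB [FB KB]];
      [lra|rewrite minus_IZR, opp_IZR; lra|replace (- (- n - 1))%Z with (n + 1)%Z in KB by lia].
    destruct (horizontal_cylinders_at_exist d th tv d_pos _ (Nat.gcd i d) GA FA)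
      as [A [LA [WA CA]]]; [rewrite KA; now apply Z_gcd_mod_nat|].
    destruct (horizontal_cylinders_at_exist d th tv d_pos _ (Nat.gcd (i + 1) d) GB FB)
      as [B [LB [WB CB]]]; [rewrite KB; now apply Z_gcd_succ_mod_nat|].
    rewrite KA in CA; rewrite KB in CB.
    exists A, B; do 4 (split; [assumption|]).
    apply (horizontal_cylinders_of_two_classes d th tv d_pos n (n + 1)); auto; [lia|].
    intros P _; now apply crossing_number_open_band.
  - intros [[n [-> Hmod]] _].
    destruct (crossing_number_at (IZR n) (/ 2) (- n)) as [G [F K]];
      [lra|rewrite opp_IZR; lra|rewrite Z.opp_involutive in K].
    destruct (horizontal_cylinders_at_exist d th (IZR n) d_pos _ (Nat.gcd i d) G F)
      as [A [LA [WA CA]]]; [rewrite K; now apply Z_gcd_mod_nat|].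
    rewrite K in CA; exists A; do 2 (split; [assumption|]).
    apply (horizontal_cylinders_of_class d th (IZR n) n); auto.
    intros P _; apply crossing_number_integral_tv.
Qed.
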